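(* Let $\Sigma$ be a set of prime numbers, $S$ the multiplicative submonoid of $\mathbb{N}$ generated by $\Sigma$. Let $(Q_q)_{q\in\Sigma}$ be a family of locally compact abelian groups such that each $Q_q$ is a topological $\mathbb{Q}_q$-vector space, and for each $q\in\Sigma$ let $Z_q$ be a compact open subgroup of $Q_q$. Then there exists a family $(n_q)_{q\in\Sigma}$ of nonnegative integers such that \[ \prod'_{q\in\Sigma}(Q_q,Z_q)\cong \prod'_{q\in\Sigma}(\mathbb{Q}_q^{n_q},\mathbb{Z}_q^{n_q}) \] as topological $\mathbb{Z}[S^{-1}]$-modules. Moreover, $\prod'_{q\in\Sigma}(Q_q,Z_q)$ has no small $\mathbb{Z}[S^{-1}]$-submodules.
   Context: All topological groups are Hausdorff; $\mathbb{Z}[S^{-1}]\subset\mathbb{Q}$ is the localization (discrete). For locally compact groups $G_q$ with compact open subgroups $H_q$, the restricted product $\prod'_{q}(G_q,H_q)$ is the subgroup of $\prod_q G_q$ of families $(g_q)$ with $g_q\in H_q$ for all but finitely many $q$, topologized by the neighbourhood basis of the identity consisting of sets $\prod_q U_q$ with $U_q$ an identity neighbourhood in $G_q$ and $U_q=H_q$ for all but finitely many $q$. A topological module has no small submodules if some neighbourhood of $0$ contains no nonzero submodule. *)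

From HB Require Import structures.
From mathcomp Require Import all_boot all_order all_algebra.
From mathcomp Require Import boolp classical_sets cardinality topology tvs.
Set Implicit Arguments. Unset Strict Implicit. Unset Printing Implicit Defensive.
Import Order.TTheory GRing.Theory Num.Theory.
Local Open Scope classical_set_scope.
Local Open Scope ring_scope.

Definition idx (Sigma : pred nat) := {q : nat | Sigma q}.

(** S = multiplicative monoid generated by Sigma: positive integers all of
    whose prime divisors lie in Sigma.  Z[S^-1] = rationals whose reduced
    denominator lies in S. *)
Definition in_S (Sigma : pred nat) (s : nat) : Prop :=
  (0 < s)%N /\ forall p, prime p -> (p %| s)%N -> Sigma p.
Definition in_ZSinv (Sigma : pred nat) (r : rat) : Prop :=
  in_S Sigma `|denq r|%N.

Definition qabs (q : nat) (r : rat) : rat :=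
  if r == 0 then 0
  else (q%:R : rat) ^ ((logn q `|denq r|)%:Z - (logn q `|numq r|)%:Z).

(** (K, absK) is a model of the field Q_q of q-adic numbers, i.e. a completion
    of Q for the q-adic absolute value: a field with an absolute value,
    complete, in which Q is dense and on which the absolute value restricts to
    |.|_q.  Such a valued field is unique up to unique isometric isomorphism. *)
Definition is_Qq_model (q : nat) (K : fieldType) (absK : K -> rat) : Prop :=
  [/\ ((forall x, 0 <= absK x) /\ (forall x, absK x = 0 <-> x = 0)),
      (forall x y, absK (x * y) = absK x * absK y),
      (forall x y, absK (x + y) <= absK x + absK y),
      (forall r : rat, absK (ratr r) = qabs q r)
    & (forall x (eps : rat), 0 < eps -> exists r : rat, absK (x - ratr r) < eps)] /\
    (forall u : nat -> K,
         (forall eps : rat, 0 < eps -> exists N, forall m n, (N <= m)%N -> (N <= n)%N ->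
              absK (u m - u n) < eps) ->
         exists l, forall eps : rat, 0 < eps -> exists N, forall n, (N <= n)%N ->
              absK (u n - l) < eps).

Definition is_top_vspace (K : fieldType) (absK : K -> rat)
    (V : topologicalZmodType) (smul : K -> V -> V) : Prop :=
  [/\ (forall a x y, smul a (x + y) = smul a x + smul a y),
      (forall a b x, smul (a + b) x = smul a x + smul b x),
      (forall a b x, smul (a * b) x = smul a (smul b x)),
      (forall x, smul 1 x = x)
    & (forall a (x : V) (W : set V), nbhs (smul a x) W ->
        exists2 eps : rat, 0 < eps &
        exists2 U : set V, nbhs x U &
          forall b y, absK (b - a) < eps -> U y -> W (smul b y))].

Definition compact_open_subgroup (V : topologicalZmodType) (Z : set V) : Prop :=
  [/\ Z 0, (forall x y, Z x -> Z y -> Z (x - y)), open Z & compact Z].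

Section RestrictedProduct.
Variables (I : Type) (G : I -> zmodType).

Definition padd (x y : forall i, G i) : forall i, G i := fun i => x i + y i.
Definition popp (x : forall i, G i) : forall i, G i := fun i => - x i.
Definition pzero : forall i, G i := fun i => 0.

(** H i : the compact open subgroups *)
Definition rp (H : forall i, set (G i)) : set (forall i, G i) :=
  [set x | finite_set [set i | ~ H i (x i)]].

(** N0 i U : "U is a neighbourhood of 0 in G i".  A basic neighbourhood of the
    identity is prod_i U i with U i a neighbourhood of 0, U i = H i for all but
    finitely many i. *)
Definition basic0 (N0 : forall i, set (set (G i))) (H : forall i, set (G i))
    (U : forall i, set (G i)) : Prop :=
  (forall i, N0 i (U i)) /\ finite_set [set i | U i <> H i].

Definition rp_open N0 H (A : set (forall i, G i)) : Prop :=
  A `<=` rp H /\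
  forall x, A x -> exists2 U, basic0 N0 H U &
     forall y, rp H y -> (forall i, U i (y i - x i)) -> A y.

Definition rp_nbhs0 N0 H (W : set (forall i, G i)) : Prop :=
  exists2 U, basic0 N0 H U & forall y, rp H y -> (forall i, U i (y i)) -> W y.

Definition rp_submodule (Sigma : pred nat) (act : forall i, rat -> G i -> G i)
   H (M : set (forall i, G i)) : Prop :=
  [/\ M `<=` rp H, M pzero,
      (forall x y, M x -> M y -> M (padd x y)),
      (forall x, M x -> M (popp x))
    & (forall r x, in_ZSinv Sigma r -> M x -> M (fun i => act i r (x i)))].

Definition no_small_submodules Sigma act N0 H : Prop :=
  exists2 W, rp_nbhs0 N0 H W &
    forall M, rp_submodule Sigma act H M -> M `<=` W -> M `<=` [set pzero].

End RestrictedProduct.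

Definition rp_iso (Sigma : pred nat) (I : Type) (G G' : I -> zmodType)
    (act : forall i, rat -> G i -> G i) (act' : forall i, rat -> G' i -> G' i)
    (N0 : forall i, set (set (G i))) (H : forall i, set (G i))
    (N0' : forall i, set (set (G' i))) (H' : forall i, set (G' i))
    (f : (forall i, G i) -> (forall i, G' i)) : Prop :=
  [/\ (forall x, rp H x -> rp H' (f x)),
      (forall x y, rp H x -> rp H y -> f x = f y -> x = y)
    & (forall y, rp H' y -> exists2 x, rp H x & f x = y)] /\
  [/\ (forall x y, rp H x -> rp H y -> f (padd x y) = padd (f x) (f y)),
      (forall r x, in_ZSinv Sigma r -> rp H x ->
          f (fun i => act i r (x i)) = (fun i => act' i r (f x i))),
      (forall A, rp_open N0' H' A -> rp_open N0 H [set x | rp H x /\ A (f x)])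
    & (forall A, rp_open N0 H A -> rp_open N0' H' (f @` A))].

Definition nbhs0_Kn (K : fieldType) (absK : K -> rat) (n : nat) :
    set (set 'rV[K]_n) :=
  fun U => exists2 eps : rat, 0 < eps &
     forall v : 'rV[K]_n, (forall j, absK (v ord0 j) < eps) -> U v.
Definition ball1_Kn (K : fieldType) (absK : K -> rat) (n : nat) : set 'rV[K]_n :=
  [set v | forall j, absK (v ord0 j) <= 1].
Arguments nbhs0_Kn {K} absK n.
Arguments ball1_Kn {K} absK n.

From HB Require Import structures.
From mathcomp Require Import all_boot all_order all_algebra.
From mathcomp Require Import boolp classical_sets cardinality topology tvs.
From mathcomp Require Import ring lra.
Import Order.TTheory GRing.Theory Num.Theory.
Set Implicit Arguments.
Unset Strict Implicit.
Unset Printing Implicit Defensive.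
Local Open Scope classical_set_scope.
Local Open Scope ring_scope.

(* Since Q is dense in K and |.| restricts to |.|_q on Q, the
   integers are dense in the unit ball O of K; hence |.| is ultrametric and the
   compact open subgroup Z of V is an O-module.  Compactness of Z makes the
   q^k Z a neighbourhood basis of 0, with intersection 0 as V is Hausdorff, and
   covers Z by finitely many cosets of qZ.  A family of minimal size n spanning Z
   over O modulo qZ spans Z itself by q-adic successive approximation (K is
   complete) and is free by minimality, so a |-> sum_j a_j x_j is an isomorphism
   K^n -> V carrying O^n onto Z and bicontinuous at 0.  These isomorphisms
   assemble coordinatewise into an isomorphism of restricted products.  Finally
   a submodule inside prod_q Z_q is stable under 1/q, so its q-coordinates lie in
   every q^k Z_q and vanish. *)

Record factor_iso (G G' : zmodType) (act : rat -> G -> G) (act' : rat -> G' -> G')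
    (N0 : set (set G)) (H : set G) (N0' : set (set G')) (H' : set G')
    (g : G -> G') (phi : G' -> G) : Prop := FactorIso {
  factor_isoK : cancel g phi;
  factor_isoKV : cancel phi g;
  factor_isoD : {morph g : u v / u + v};
  factor_iso_act : forall r x, g (act r x) = act' r (g x);
  factor_iso_sub : forall x, H' (g x) <-> H x;
  factor_iso_nbhs0 : forall U, N0' U -> N0 [set x | U (g x)];
  factor_iso_nbhs0V : forall U, N0 U -> N0' [set y | U (phi y)] }.

Section FactorIsoTheory.
Variables (G G' : zmodType) (act : rat -> G -> G) (act' : rat -> G' -> G').
Variables (N0 : set (set G)) (H : set G) (N0' : set (set G')) (H' : set G').
Variables (g : G -> G') (phi : G' -> G).
Hypothesis gI : factor_iso act act' N0 H N0' H' g phi.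

Lemma factor_isoB u v : g (u - v) = g u - g v.
Proof. by apply: (addIr (g v)); rewrite -(factor_isoD gI) !subrK. Qed.

Lemma factor_isoVB a b : phi (a - b) = phi a - phi b.
Proof.
rewrite -{1}[a](factor_isoKV gI) -{1}[b](factor_isoKV gI) -factor_isoB.
exact: (factor_isoK gI).
Qed.

Lemma factor_isoV_sub y : H (phi y) <-> H' y.
Proof. by rewrite -{2}[y](factor_isoKV gI); apply: iff_sym (factor_iso_sub gI _). Qed.

End FactorIsoTheory.

Lemma rp_map (I : Type) (G G' : I -> zmodType) (H : forall i, set (G i))
    (H' : forall i, set (G' i)) (f : forall i, G i -> G' i) x :
  (forall i x, H i x -> H' i (f i x)) -> rp H x -> rp H' (fun i => f i (x i)).
Proof. by move=> fH; apply: sub_finite_set => i /= nHx Hx; apply/nHx/fH. Qed.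

Lemma basic0_preimage (I : Type) (G G' : I -> zmodType)
    (N0 : forall i, set (set (G i))) (H : forall i, set (G i))
    (N0' : forall i, set (set (G' i))) (H' : forall i, set (G' i))
    (f : forall i, G i -> G' i) U :
  (forall i U, N0' i U -> N0 i [set x | U (f i x)]) ->
  (forall i x, H' i (f i x) <-> H i x) ->
  basic0 N0' H' U -> basic0 N0 H (fun i => [set x | U i (f i x)]).
Proof.
move=> fN0 fH [U0 Ufin]; split=> [i|]; first exact: fN0.
apply: sub_finite_set Ufin => i /= preUH UH; apply: preUH; rewrite UH.
by apply/funext => x; apply/propext; apply: fH.
Qed.

Lemma rp_iso_coordinatewise (Sigma : pred nat) (I : Type) (G G' : I -> zmodType)
    (act : forall i, rat -> G i -> G i) (act' : forall i, rat -> G' i -> G' i)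
    (N0 : forall i, set (set (G i))) (H : forall i, set (G i))
    (N0' : forall i, set (set (G' i))) (H' : forall i, set (G' i))
    (g : forall i, G i -> G' i) (phi : forall i, G' i -> G i) :
  (forall i, factor_iso (act i) (act' i) (N0 i) (H i) (N0' i) (H' i) (g i) (phi i)) ->
  rp_iso Sigma act act' N0 H N0' H' (fun x i => g i (x i)).
Proof.
move=> gI; have gH i x : H i x -> H' i (g i x) by move=> /(factor_iso_sub (gI i)).
have phiH i y : H' i y -> H i (phi i y) by move=> /(factor_isoV_sub (gI i)).
split; split.
- by move=> x; apply: rp_map gH.
- move=> x y _ _ gxy; apply: functional_extensionality_dep => i.
  by apply: (can_inj (factor_isoK (gI i))); apply: (congr1 (fun f => f i) gxy).
- move=> y /(rp_map phiH) rpy; exists (fun i => phi i (y i)) => //=.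
  by apply: functional_extensionality_dep => i; apply: (factor_isoKV (gI i)).
- move=> x y _ _; apply: functional_extensionality_dep => i.
  exact: (factor_isoD (gI i)).
- move=> r x _ _; apply: functional_extensionality_dep => i.
  exact: (factor_iso_act (gI i)).
- move=> A [_ A_open]; split=> [x []//|x [rx Agx]].
  have [U U0 UA] := A_open _ Agx.
  exists (fun i => [set v | U i (g i v)]).
    apply: basic0_preimage U0 => i; first exact: (factor_iso_nbhs0 (gI i)).
    exact: (factor_iso_sub (gI i)).
  move=> y ry Uyx; split=> //; apply: UA (rp_map gH ry) _ => i.
  by rewrite -(factor_isoB (gI i)); apply: Uyx.
- move=> A [Arp A_open]; split=> [_ [x Ax <-]|_ [x Ax <-]]; first exact/(rp_map gH)/Arp.
  have [U U0 UA] := A_open _ Ax.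
  exists (fun i => [set y | U i (phi i y)]).
    apply: basic0_preimage U0 => i; first exact: (factor_iso_nbhs0V (gI i)).
    exact: (factor_isoV_sub (gI i)).
  move=> y ry Uyx; exists (fun i => phi i (y i)).
    apply: UA (rp_map phiH ry) _ => i; have := Uyx i.
    by rewrite /= (factor_isoVB (gI i)) (factor_isoK (gI i)).
  by apply: functional_extensionality_dep => i; apply: (factor_isoKV (gI i)).
Qed.

Lemma rp_no_small_submodules (Sigma : pred nat) (I : Type) (G : I -> zmodType)
    (act : forall i, rat -> G i -> G i) (N0 : forall i, set (set (G i)))
    (H : forall i, set (G i)) :
  (forall i, N0 i (H i)) ->
  (forall i, exists2 r, in_ZSinv Sigma r &
     forall x, (forall k, H i (iter k (act i r) x)) -> x = 0) ->
  no_small_submodules Sigma act N0 H.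
Proof.
move=> N0H contracting; exists [set x | forall i, H i (x i)].
  exists H => //; split=> //.
  by apply: sub_finite_set (finite_set0 I) => i /=; apply.
move=> M [_ _ _ _ M_act] MH x Mx; apply: functional_extensionality_dep => i.
have [r rS r_contracting] := contracting i; apply: r_contracting => k.
have : M (fun j => iter k (act j r) (x j)).
  by elim: k => [|k IH] //; apply: M_act rS IH.
by move/MH; apply.
Qed.

Lemma in_ZSinv_natV (Sigma : pred nat) q : prime q -> Sigma q -> in_ZSinv Sigma q%:R^-1.
Proof.
move=> q_prime Sq; have q0 : q%:Z != 0 by rewrite eqz_nat -lt0n prime_gt0.
rewrite /in_ZSinv pmulrn denqVz //; split; first by rewrite absz_gt0.
by move=> p p_prime; rewrite absz_nat dvdn_prime2 // => /eqP->.
Qed.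

Lemma nbhs_translate (V : topologicalZmodType) (x y : V) (A : set V) :
  nbhs (y - x) A -> nbhs y [set v | A (v - x)].
Proof.
move=> yxA; have : (fun v : V => v - x) @ y --> y - x.
  apply: (@continuous_comp _ _ _ (fun v : V => (v, x)) (fun p : V * V => p.1 - p.2)).
    by apply: cvg_pair; [exact: cvg_id | exact: cvg_cst].
  exact: sub_continuous.
exact.
Qed.

Lemma ratr_natV (R : unitRingType) n : (0 < n)%N -> ratr (n%:R^-1 : rat) = (n%:R : R)^-1.
Proof.
move=> n0; have nz : n%:Z != 0 by rewrite eqz_nat -lt0n.
have := @coprimeq_num 1 n%:Z (coprime1n _).
rewrite mulr1 gtr0_sg ?ltz_nat // mulr1z mul1r => num1.
by rewrite /ratr pmulrn denqVz // num1 ger0_norm // mulr1z -pmulrn mul1r.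
Qed.

Section QqModel.
Variables (q : nat) (K : fieldType) (absK : K -> rat).
Hypotheses (q_prime : prime q) (HK : is_Qq_model q absK).

Let absK_axioms := HK.1.

Lemma absK_ge0 x : 0 <= absK x. Proof. by case: absK_axioms => -[]. Qed.
Lemma absK_eq0 x : absK x = 0 <-> x = 0. Proof. by case: absK_axioms => -[]. Qed.
Lemma absKM x y : absK (x * y) = absK x * absK y. Proof. by case: absK_axioms. Qed.
Lemma absK_triangle x y : absK (x + y) <= absK x + absK y.
Proof. by case: absK_axioms. Qed.
Lemma absK_ratr r : absK (ratr r) = qabs q r. Proof. by case: absK_axioms. Qed.
Lemma absK_dense x eps : 0 < eps -> exists r : rat, absK (x - ratr r) < eps.
Proof. by case: absK_axioms => _ _ _ _; apply. Qed.

Lemma absK0 : absK 0 = 0. Proof. exact/absK_eq0. Qed.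

Lemma absK_gt0 x : x != 0 -> 0 < absK x.
Proof. by move=> x0; rewrite lt_def absK_ge0 andbT; apply: contra x0 => /eqP/absK_eq0->. Qed.

Lemma absK1 : absK 1 = 1.
Proof.
apply: (@mulfI _ (absK 1)); last by rewrite -absKM !mulr1.
by rewrite gt_eqF // absK_gt0 ?oner_neq0.
Qed.

Lemma absKN x : absK (- x) = absK x.
Proof.
have absKN1 : absK (-1) = 1.
  have /eqP : absK (-1) ^+ 2 = 1 by rewrite expr2 -absKM mulrNN mulr1 absK1.
  by rewrite sqrp_eq1 ?absK_ge0 // => /eqP.
by rewrite -mulN1r absKM absKN1 mul1r.
Qed.

Lemma absK_distC x y : absK (x - y) = absK (y - x).
Proof. by rewrite -absKN opprB. Qed.

Lemma absKV x : absK x^-1 = (absK x)^-1.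
Proof.
have [->|x0] := eqVneq x 0; first by rewrite invr0 absK0 invr0.
apply: (@mulfI _ (absK x)); first by rewrite gt_eqF // absK_gt0.
by rewrite -absKM !mulfV ?absK1 // gt_eqF // absK_gt0.
Qed.

Lemma absKX x n : absK (x ^+ n) = absK x ^+ n.
Proof. by elim: n => [|n IH]; rewrite ?expr0 ?absK1 // !exprS absKM IH. Qed.

Lemma q_gt1 : 1 < q%:R :> rat. Proof. by rewrite ltr1n prime_gt1. Qed.
Lemma q_gt0 : 0 < q%:R :> rat. Proof. exact: lt_trans ltr01 q_gt1. Qed.

Lemma qpowV_gt0 k : 0 < (q%:R : rat) ^- k.
Proof. by rewrite invr_gt0 exprn_gt0 // q_gt0. Qed.

Lemma qpowV_le1 k : (q%:R : rat) ^- k <= 1.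
Proof. by rewrite invf_le1 ?exprn_gt0 ?q_gt0 // exprn_ege1 // ltW // q_gt1. Qed.

Lemma qpowV_mono k l : (l <= k)%N -> (q%:R : rat) ^- k <= (q%:R : rat) ^- l.
Proof.
by move=> lk; rewrite lef_pV2 ?posrE ?exprn_gt0 ?q_gt0 // ler_eXn2l // q_gt1.
Qed.

Lemma exists_qpowV_lt eps : 0 < eps -> exists N, (q%:R : rat) ^- N < eps.
Proof.
move=> eps0; set B := Num.Def.archi_bound eps^-1; exists B.
rewrite -[eps]invrK ltf_pV2 ?posrE ?exprn_gt0 ?q_gt0 ?invr_gt0 //.
have epsV0 : 0 <= eps^-1 by rewrite invr_ge0 ltW.
apply: lt_le_trans (archi_boundP epsV0) _.
rewrite -natrX ler_nat; apply: (leq_trans (ltnW (ltn_expl B (isT : (1 < 2)%N)))).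
by rewrite leq_exp2r // prime_gt1.
Qed.

Lemma absK_int (m : int) : m != 0 -> absK m%:~R = (q%:R : rat) ^- logn q `|m|.
Proof.
move=> m0; rewrite -ratr_int absK_ratr /qabs intr_eq0 (negbTE m0) denq_int numq_int.
by rewrite logn1 /= sub0r -exprnN exprnP invr_expz.
Qed.

Lemma absK_int_le1 (m : int) : absK m%:~R <= 1.
Proof.
have [->|m0] := eqVneq m 0; first by rewrite mulr0z absK0.
by rewrite absK_int // qpowV_le1.
Qed.

Lemma absK_int_coprime (m : int) : ~~ (q %| `|m|)%N -> absK m%:~R = 1.
Proof.
move=> qNm; have m0 : m != 0 by apply: contra qNm => /eqP ->.
by rewrite absK_int // logn_coprime ?expr0 ?invr1 // prime_coprime.
Qed.

Lemma absK_int_dvd (m : int) : m != 0 -> (q %| `|m|)%N -> absK m%:~R <= (q%:R)^-1.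
Proof.
move=> m0 qm; have -> : (q%:R : rat)^-1 = q%:R ^- 1 by rewrite expr1.
rewrite absK_int // qpowV_mono //.
by rewrite logn_gt0 mem_primes q_prime absz_gt0 m0.
Qed.

Lemma intr_neq0 (m : int) : m != 0 -> (m%:~R : K) != 0.
Proof.
move=> m0; apply: contraTneq (qpowV_gt0 (logn q `|m|)) => m0K.
by rewrite -absK_int // m0K absK0 ltxx.
Qed.

Lemma q_neq0 : (q%:R : K) != 0.
Proof. by apply: (@intr_neq0 q%:Z); rewrite eqz_nat -lt0n prime_gt0. Qed.

Lemma absK_qX k : absK (q%:R ^+ k) = (q%:R : rat) ^- k.
Proof.
have -> : (q%:R : K) = (q%:Z)%:~R by [].
rewrite absKX absK_int ?logn_prime ?eqxx ?expr1 // ?exprVn //.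
by rewrite eqz_nat -lt0n prime_gt0.
Qed.

Lemma ratr_numq r : (numq r)%:~R = ratr r * (denq r)%:~R :> K.
Proof. by rewrite /ratr divfK // intr_neq0 // denq_neq0. Qed.

(* The value group is q^Z, so an absolute value < q is <= 1. *)
Lemma denq_coprime_q r : absK (ratr r) < q%:R -> ~~ (q %| `|denq r|)%N.
Proof.
move=> rq; apply/negP => qden.
have qNnum : ~~ (q %| `|numq r|)%N.
  apply/negP => qnum; have := coprime_dvdl qnum (coprime_num_den r).
  by rewrite prime_coprime // qden.
have := congr1 absK (ratr_numq r); rewrite absK_int_coprime // absKM => r_den.
have : 1 <= absK (ratr r) * (q%:R)^-1.
  by rewrite [X in X <= _]r_den ler_wpM2l ?absK_ge0 // absK_int_dvd ?denq_neq0.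
by rewrite ler_pdivlMr ?q_gt0 // mul1r leNgt rq.
Qed.

Lemma ratr_int_approx r N : ~~ (q %| `|denq r|)%N ->
  exists m : int, absK (ratr r - m%:~R) <= (q%:R : rat) ^- N.
Proof.
move=> qNden; have [u [v uv]] := Bezoutz (denq r) (q%:Z ^+ N).
have /eqP cop : coprimez (denq r) (q%:Z ^+ N).
  by apply: coprimezXr; rewrite coprimezE coprime_sym prime_coprime.
rewrite cop in uv; exists (numq r * u).
have key : (ratr r - (numq r * u)%:~R) * (denq r)%:~R =
           (numq r * v)%:~R * q%:R ^+ N :> K.
  rewrite mulrBl -ratr_numq.
  have -> : (q%:R ^+ N : K) = (q%:Z ^+ N)%:~R by rewrite rmorphXn.
  rewrite -!intrM -intrB; congr (_%:~R).
  have vq : v * q%:Z ^+ N = 1 - u * denq r by rewrite -uv; ring.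
  by rewrite -[RHS]mulrA vq; ring.
have := congr1 absK key.
rewrite !absKM [absK (denq r)%:~R]absK_int_coprime // mulr1 absK_qX => ->.
by rewrite ler_piMl ?absK_int_le1 // ltW // qpowV_gt0.
Qed.

Lemma unit_ball_int_approx t eps : absK t <= 1 -> 0 < eps ->
  exists m : int, absK (t - m%:~R) < eps.
Proof.
move=> t1 eps0; have [N epsN] := exists_qpowV_lt (divr_gt0 eps0 (ltr0n _ 2)).
have [r tr] := absK_dense t (qpowV_gt0 N).
have rq : absK (ratr r) < q%:R.
  have -> : ratr r = t - (t - ratr r) by rewrite opprB addrC subrK.
  apply: le_lt_trans (absK_triangle _ _) _; rewrite absKN.
  apply: lt_le_trans (ler_ltD t1 tr) _.
  by apply: le_trans (lerD (lexx 1) (qpowV_le1 N)) _; rewrite -mulr2n ler_nat prime_gt1.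
have [m rm] := ratr_int_approx N (denq_coprime_q rq); exists m.
have -> : t - m%:~R = (t - ratr r) + (ratr r - m%:~R) by rewrite addrA subrK.
apply: le_lt_trans (absK_triangle _ _) _; apply: lt_le_trans (ltr_leD tr rm) _.
lra.
Qed.

Lemma absK_1D t : absK t <= 1 -> absK (1 + t) <= 1.
Proof.
move=> t1; apply/ler_addgt0Pr => eps eps0.
have [m tm] := unit_ball_int_approx t1 eps0.
have -> : 1 + t = (1 + m)%:~R + (t - m%:~R) by rewrite intrD; ring.
by apply: le_trans (absK_triangle _ _) _; rewrite lerD ?absK_int_le1 // ltW.
Qed.

Lemma absKD_le_l x y : absK y <= absK x -> absK (x + y) <= absK x.
Proof.
move=> yx; have [x0|x0] := eqVneq x 0; first by move: yx; rewrite x0 add0r.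
have -> : x + y = x * (1 + y / x) by rewrite mulrDr mulr1 mulrCA mulfV // mulr1.
rewrite absKM ler_piMr ?absK_ge0 // absK_1D //.
by rewrite absKM absKV ler_pdivrMr ?mul1r // absK_gt0.
Qed.

Lemma absKD_ultra x y e : absK x <= e -> absK y <= e -> absK (x + y) <= e.
Proof.
move=> xe ye; have [yx|/ltW xy] := leP (absK y) (absK x).
  exact: le_trans (absKD_le_l yx) xe.
by rewrite addrC; apply: le_trans (absKD_le_l xy) ye.
Qed.

Fixpoint qadic_sum (c : nat -> K) k : K :=
  if k is k'.+1 then qadic_sum c k' + q%:R ^+ k' * c k' else 0.

Lemma qadic_sum_cauchy c k m : (forall l, absK (c l) <= 1) -> (k <= m)%N ->
  absK (qadic_sum c m - qadic_sum c k) <= (q%:R : rat) ^- k.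
Proof.
move=> c1; elim: m => [|m IH].
  by rewrite leqn0 => /eqP->; rewrite subrr absK0 ltW // qpowV_gt0.
rewrite leq_eqVlt => /orP[/eqP->|km]; first by rewrite subrr absK0 ltW // qpowV_gt0.
rewrite /= addrAC; apply: absKD_ultra; first exact: IH.
rewrite absKM absK_qX; apply: le_trans (ler_wpM2l (ltW (qpowV_gt0 m)) (c1 m)) _.
by rewrite mulr1 qpowV_mono // -ltnS.
Qed.

Lemma qadic_sum_cvg c : (forall l, absK (c l) <= 1) ->
  exists alpha, forall k, absK (alpha - qadic_sum c k) <= (q%:R : rat) ^- k.
Proof.
move=> c1; have [l lim_l] : exists l, forall eps : rat, 0 < eps ->
    exists N, forall n, (N <= n)%N -> absK (qadic_sum c n - l) < eps.
  apply: HK.2 => eps eps0; have [N epsN] := exists_qpowV_lt eps0; exists N.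
  suff cauchy m n : (N <= n)%N -> (n <= m)%N -> absK (qadic_sum c m - qadic_sum c n) < eps.
    move=> m n Nm Nn; have [/(cauchy _ _ Nn)//|/ltnW mn] := leqP n m.
    by rewrite absK_distC cauchy.
  move=> Nn nm; apply: le_lt_trans epsN.
  exact: le_trans (qadic_sum_cauchy c1 nm) (qpowV_mono Nn).
exists l => k; have [N lim_N] := lim_l _ (qpowV_gt0 k).
have -> : l - qadic_sum c k = (qadic_sum c (maxn N k) - qadic_sum c k)
                              - (qadic_sum c (maxn N k) - l) by ring.
apply: absKD_ultra; first exact: qadic_sum_cauchy c1 (leq_maxr N k).
by rewrite absKN ltW // lim_N // leq_maxl.
Qed.


Section TopVectorSpace.
Variables (V : topologicalZmodType) (smul : K -> V -> V) (Z : set V).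
Hypotheses (V_hausdorff : hausdorff_space V) (smul_tvs : is_top_vspace absK smul)
  (Z_cos : compact_open_subgroup Z).

Lemma smulDr a x y : smul a (x + y) = smul a x + smul a y.
Proof. by case: smul_tvs. Qed.
Lemma smulDl a b x : smul (a + b) x = smul a x + smul b x.
Proof. by case: smul_tvs. Qed.
Lemma smulA a b x : smul (a * b) x = smul a (smul b x).
Proof. by case: smul_tvs. Qed.
Lemma smul1 x : smul 1 x = x.
Proof. by case: smul_tvs. Qed.
Lemma smul_continuous a x W : nbhs (smul a x) W ->
  exists2 eps : rat, 0 < eps & exists2 U, nbhs x U &
     forall b y, absK (b - a) < eps -> U y -> W (smul b y).
Proof. by case: smul_tvs => _ _ _ _; apply. Qed.

Lemma smul0r x : smul 0 x = 0.
Proof. by apply: (@addrI _ (smul 0 x)); rewrite -smulDl !addr0. Qed.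
Lemma smulr0 a : smul a 0 = 0.
Proof. by apply: (@addrI _ (smul a 0)); rewrite -smulDr !addr0. Qed.
Lemma smulNl a x : smul (- a) x = - smul a x.
Proof. by apply/eqP; rewrite -addr_eq0 -smulDl addNr smul0r. Qed.
Lemma smulNr a x : smul a (- x) = - smul a x.
Proof. by apply/eqP; rewrite -addr_eq0 -smulDr addNr smulr0. Qed.
Lemma smulBl a b x : smul (a - b) x = smul a x - smul b x.
Proof. by rewrite smulDl smulNl. Qed.
Lemma smul_sumr (I : finType) a (F : I -> V) :
  smul a (\sum_j F j) = \sum_j smul a (F j).
Proof. exact: (big_morph _ (smulDr a) (smulr0 a)). Qed.
Lemma smulKV c x : c != 0 -> smul c (smul c^-1 x) = x.
Proof. by move=> c0; rewrite -smulA mulfV // smul1. Qed.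
Lemma smulVK c x : c != 0 -> smul c^-1 (smul c x) = x.
Proof. by move=> c0; rewrite -smulA mulVf // smul1. Qed.

Lemma smul_int (m : int) x : smul m%:~R x = x *~ m.
Proof.
have smul_nat n : smul n%:R x = x *+ n.
  by elim: n => [|n IH]; rewrite ?smul0r // -natr1 smulDl IH smul1 mulrSr.
by case: m => n; rewrite ?NegzE ?mulrNz ?smulNl -!pmulrn smul_nat.
Qed.

Lemma Z0 : Z 0. Proof. by case: Z_cos. Qed.
Lemma ZB x y : Z x -> Z y -> Z (x - y). Proof. by case: Z_cos => _ + _ _; apply. Qed.
Lemma ZN x : Z x -> Z (- x). Proof. by rewrite -sub0r; apply: ZB Z0. Qed.
Lemma ZD x y : Z x -> Z y -> Z (x + y).
Proof. by move=> Zx /ZN Zy; rewrite -[y]opprK; apply: ZB. Qed.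
Lemma Zmulz x (m : int) : Z x -> Z (x *~ m).
Proof.
have ZmulN n : Z x -> Z (x *+ n).
  by move=> Zx; elim: n => [|n IH]; [rewrite mulr0n; exact: Z0 | rewrite mulrS; exact: ZD].
by case: m => n Zx; rewrite ?NegzE ?mulrNz -pmulrn; [|apply: ZN]; apply: ZmulN.
Qed.
Lemma Z_sum (I : finType) (F : I -> V) : (forall j, Z (F j)) -> Z (\sum_j F j).
Proof. by move=> ZF; elim/big_rec: _ => [|j s _]; [exact: Z0 | exact: ZD]. Qed.
Lemma Z_nbhs0 : nbhs (0 : V) Z.
Proof. by case: Z_cos => Z0 _ Zopen _; apply: open_nbhs_nbhs. Qed.

(* Z being open, smul b x - smul a x lies in Z for b close to a, and such b
   can be taken to be an integer. *)
Lemma Z_unit_ball_stable a x : absK a <= 1 -> Z x -> Z (smul a x).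
Proof.
move=> a1 Zx.
have : nbhs (smul a x) [set v | Z (v - smul a x)].
  by apply: nbhs_translate; rewrite subrr; exact: Z_nbhs0.
move=> /smul_continuous[eps eps0 [U Ux UZ]].
have [m am] := unit_ball_int_approx a1 eps0.
have := UZ m%:~R x; rewrite absK_distC smul_int => /(_ am (nbhs_singleton Ux)) Zmax.
have -> : smul a x = x *~ m - (x *~ m - smul a x) by rewrite opprB addrC subrK.
by apply: ZB Zmax; apply: Zmulz.
Qed.

Lemma Z_compact : compact Z. Proof. by case: Z_cos. Qed.

Lemma nbhs0_smul_preimage c (A : set V) :
  nbhs (0 : V) A -> nbhs (0 : V) [set v | A (smul c v)].
Proof.
move=> A0; have /smul_continuous[eps eps0 [U U0 UA]] : nbhs (smul c 0) A by rewrite smulr0.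
by apply: filterS U0 => y Uy; apply: UA => //; rewrite subrr absK0.
Qed.

Let qX_neq0 k : (q%:R : K) ^+ k != 0. Proof. exact: expf_neq0 q_neq0. Qed.

Definition qpowZ k : set V := [set v | Z (smul (q%:R ^- k) v)].

Lemma qpowZ_nbhs0 k : nbhs (0 : V) (qpowZ k).
Proof. exact: nbhs0_smul_preimage Z_nbhs0. Qed.

Lemma qpowZ_smul k z : Z z -> qpowZ k (smul (q%:R ^+ k) z).
Proof. by rewrite /qpowZ /= smulVK. Qed.

Lemma qpowZ_elim k v : qpowZ k v -> exists2 z, Z z & v = smul (q%:R ^+ k) z.
Proof. by move=> Zv; exists (smul (q%:R ^- k) v); rewrite ?smulKV. Qed.

Lemma qpowZD k x y : qpowZ k x -> qpowZ k y -> qpowZ k (x + y).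
Proof. by rewrite /qpowZ /= smulDr; apply: ZD. Qed.

Lemma qpowZ_sum k (I : finType) (F : I -> V) :
  (forall j, qpowZ k (F j)) -> qpowZ k (\sum_j F j).
Proof. by rewrite /qpowZ /= smul_sumr; apply: Z_sum. Qed.

Lemma qpowZ_small k a z : absK a <= (q%:R : rat) ^- k -> Z z -> qpowZ k (smul a z).
Proof.
move=> ak Zz; rewrite /qpowZ /= -smulA; apply: Z_unit_ball_stable => //.
rewrite absKM absKV absK_qX invrK mulrC -ler_pdivlMr ?exprn_gt0 ?q_gt0 //.
by rewrite mul1r.
Qed.

(* q^k z converges to 0 locally uniformly in z, hence uniformly on the compact Z. *)
Lemma nbhs0_qpowZ (W : set V) : nbhs (0 : V) W -> exists k, qpowZ k `<=` W.
Proof.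
move=> W0.
have near_W x : Z x -> \forall v \near x & k \near \oo, W (smul (q%:R ^+ k) v).
  move=> _; have /smul_continuous[eps eps0 [U Ux UW]] : nbhs (smul 0 x) W by rewrite smul0r.
  have [N epsN] := exists_qpowV_lt eps0.
  exists (U, [set n | (N <= n)%N]); first by split => //; exact: nbhs_infty_ge.
  case=> v k [/= Uv Nk]; apply: UW => //; rewrite subr0 absK_qX.
  exact: le_lt_trans (qpowV_mono Nk) epsN.
have [N _ NW] := (compact_near_coveringP Z).1 Z_compact _ _ _ _ near_W.
by exists N => v /qpowZ_elim[z Zz ->]; exact: (NW N (leqnn N) z Zz).
Qed.

Lemma qpowZ_inter v : (forall k, qpowZ k v) -> v = 0.
Proof.
move=> vZ; apply/eqP; apply: contraT; rewrite eq_sym => v0.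
have [A [Aopen A0 Av]] := hausdorff_accessible V_hausdorff v0.
move: A0 Av; rewrite !in_setE => A0 /= Av.
have [k kA] := nbhs0_qpowZ (open_nbhs_nbhs (conj Aopen A0)).
by case: Av; apply: kA.
Qed.

Lemma qpowZ_absorbing v : exists k, Z (smul (q%:R ^+ k) v).
Proof.
have /smul_continuous[eps eps0 [U Uv UZ]] : nbhs (smul 0 v) Z.
  by rewrite smul0r; exact: Z_nbhs0.
have [N epsN] := exists_qpowV_lt eps0; exists N; apply: UZ (nbhs_singleton Uv).
by rewrite subr0 absK_qX.
Qed.

Lemma Z_finite_cover_mod_q : exists s : seq V, {subset s <= Z} /\
  forall z, Z z -> exists2 x, x \in s & qpowZ 1 (z - x).
Proof.
(* Near-coverings along the filter of finite sequences ordered by inclusion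
   are finite subcovers. *)
pose F : set_system (seq V) := fun A =>
  exists s0 : seq V, forall s : seq V, {subset s0 <= s} -> A s.
have F_filter : Filter F.
  apply: Build_Filter; first by exists [::].
    move=> A B [s0 A0] [s1 B1]; exists (s0 ++ s1) => s sub; split.
      by apply: A0 => x xs0; apply: sub; rewrite mem_cat xs0.
    by apply: B1 => x xs1; apply: sub; rewrite mem_cat xs1 orbT.
  by move=> A B AB [s0 A0]; exists s0 => s /A0/AB.
pose P (s : seq V) (v : V) := exists2 x, x \in s & Z x /\ qpowZ 1 (v - x).
have near_P x : Z x -> \forall v \near x & s \near F, P s v.
  move=> Zx; exists ([set v | qpowZ 1 (v - x)], [set s : seq V | x \in s]).
    split; first by apply: nbhs_translate; rewrite subrr; exact: qpowZ_nbhs0.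
    by exists [:: x] => s; apply; rewrite mem_seq1.
  by case=> v s [/= xv xs]; exists x.
have [s0 cover] := (compact_near_coveringP Z).1 Z_compact _ _ _ F_filter near_P.
exists [seq x <- s0 | `[< Z x >]]; split.
  by move=> x; rewrite mem_filter in_setE => /andP[/asboolP].
move=> z Zz; have [x xs0 [Zx zx]] := cover s0 (fun x xs0 => xs0) z Zz.
by exists x; rewrite // mem_filter xs0 andbT; apply/asboolP.
Qed.

Lemma iter_smul c k x : iter k (smul c) x = smul (c ^+ k) x.
Proof. by elim: k => [|k /= ->]; rewrite ?smul1 // -smulA exprS. Qed.

Lemma qinv_orbit_in_Z x : (forall k, Z (iter k (smul (ratr (q%:R)^-1)) x)) -> x = 0.
Proof.
move=> orbitZ; apply: qpowZ_inter => k.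
by have := orbitZ k; rewrite iter_smul ratr_natV ?prime_gt0 // exprVn.
Qed.

Definition spans_mod_q n (xs : 'I_n -> V) : Prop :=
  (forall j, Z (xs j)) /\
  forall z, Z z -> exists2 c : 'I_n -> K, (forall j, absK (c j) <= 1) &
    qpowZ 1 (z - \sum_j smul (c j) (xs j)).

Lemma spans_mod_q_exists : exists n (xs : 'I_n -> V), spans_mod_q xs.
Proof.
have [s [sZ s_cover]] := Z_finite_cover_mod_q.
exists (size s), (fun j => nth 0 s j); split.
  by move=> j; rewrite -in_setE; apply: sZ; rewrite mem_nth.
move=> z Zz; have [x xs zx] := s_cover z Zz.
have x_idx : (index x s < size s)%N by rewrite index_mem.
exists (fun k => (k == Ordinal x_idx)%:R).
  by move=> k; case: eqP; rewrite ?absK1 ?absK0.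
rewrite (bigD1 (Ordinal x_idx)) //= eqxx smul1 big1 ?addr0 ?nth_index //.
by move=> k /negbTE->; rewrite smul0r.
Qed.

Lemma min_spans_mod_q_exists : exists n (xs : 'I_n -> V),
  spans_mod_q xs /\ forall m (ys : 'I_m -> V), spans_mod_q ys -> (n <= m)%N.
Proof.
have size_ex : exists n, `[< exists xs : 'I_n -> V, spans_mod_q xs >].
  by have [n [xs xs_spans]] := spans_mod_q_exists; exists n; apply/asboolP; exists xs.
case: (ex_minnP size_ex) => n /asboolP[xs xs_spans] n_min.
by exists n, xs; split => // m ys ys_spans; apply: n_min; apply/asboolP; exists ys.
Qed.

Section Spanning.
Variables (n : nat) (xs : 'I_n -> V).
Hypothesis xs_spans : spans_mod_q xs.

(* Successive approximation, each step dividing the remainder by q. *)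
Lemma spans_mod_q_approx z : Z z -> exists c : 'I_n -> nat -> K,
  (forall j l, absK (c j l) <= 1) /\
  forall k, qpowZ k (z - \sum_j smul (qadic_sum (c j) k) (xs j)).
Proof.
move=> Zz.
have step v : exists p : ('I_n -> K) * V, Z v ->
    [/\ forall j, absK (p.1 j) <= 1, Z p.2 &
        v = \sum_j smul (p.1 j) (xs j) + smul (q%:R ^+ 1) p.2].
  case: (pselect (Z v)) => [Zv|]; last by exists (fun=> 0, 0).
  have [c c1 /qpowZ_elim[w Zw vw]] := xs_spans.2 v Zv.
  by exists (c, w) => _; split => //; rewrite -vw addrC subrK.
have [next next_spec] := choice step.
pose w k := iter k (fun v => (next v).2) z.
have Zw k : Z (w k) by elim: k => [|k IH] //=; have [] := next_spec _ IH.
exists (fun j l => (next (w l)).1 j); split.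
  by move=> j l; have [] := next_spec _ (Zw l).
suff expand k : z = \sum_j smul (qadic_sum (fun l => (next (w l)).1 j) k) (xs j)
                    + smul (q%:R ^+ k) (w k).
  by move=> k; rewrite {1}(expand k) addrAC subrr add0r; apply: qpowZ_smul.
elim: k => [|k IH].
  by rewrite big1 ?add0r ?expr0 ?smul1 // => j _; rewrite smul0r.
rewrite {1}IH; have [_ _ wk] := next_spec _ (Zw k).
rewrite {1}wk smulDr smul_sumr -smulA -exprD addn1 addrA -big_split /=.
by congr (_ + _); apply: eq_bigr => j _; rewrite smulDl smulA.
Qed.

Lemma spans_mod_q_expansion z : Z z ->
  exists2 a : 'I_n -> K, (forall j, absK (a j) <= 1) & z = \sum_j smul (a j) (xs j).
Proof.
move=> /spans_mod_q_approx[c [c1 approx]].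
have /choice[a a_lim] : forall j, exists a,
    forall k, absK (a - qadic_sum (c j) k) <= (q%:R : rat) ^- k.
  by move=> j; apply: qadic_sum_cvg.
exists a; first by move=> j; have := a_lim j 0%N; rewrite subr0 expr0 invr1.
apply/eqP; rewrite -subr_eq0; apply/eqP/qpowZ_inter => k.
rewrite -(subrK (\sum_j smul (qadic_sum (c j) k) (xs j)) z) -addrA.
apply: qpowZD (approx k) _; rewrite -sumrB; apply: qpowZ_sum => j.
by rewrite -smulBl; apply: qpowZ_small (xs_spans.1 j); rewrite absK_distC.
Qed.

Lemma spans_mod_q_drop i (b : 'I_n -> K) : (forall j, absK (b j) <= 1) ->
  xs i = - \sum_(k < n.-1) smul (b (lift i k)) (xs (lift i k)) ->
  spans_mod_q (fun k : 'I_n.-1 => xs (lift i k)).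
Proof.
move=> b1 xs_i; split => [k|z Zz]; first exact: xs_spans.1.
have [c c1 zc] := xs_spans.2 z Zz.
exists (fun k => c (lift i k) - c i * b (lift i k)).
  by move=> k; apply: absKD_ultra => //; rewrite absKN absKM -[1]mulr1 ler_pM ?absK_ge0.
suff -> : \sum_k smul (c (lift i k) - c i * b (lift i k)) (xs (lift i k)) =
          \sum_j smul (c j) (xs j) by [].
rewrite [RHS](bigD1_ord i) //= xs_i smulNr smul_sumr addrC -sumrB.
by apply: eq_bigr => k _; rewrite smulBl smulA.
Qed.

Hypothesis xs_min : forall m (ys : 'I_m -> V), spans_mod_q ys -> (n <= m)%N.

(* If some b j != 0, normalizing by a coefficient of maximal absolute value
   writes one generator in terms of the others, contradicting minimality. *)
Lemma min_spans_mod_q_free b : \sum_j smul (b j) (xs j) = 0 -> forall j, b j = 0.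
Proof.
move=> Sb0 j0; apply/eqP; apply: contraT => bj0.
have [i _ bi_max] := @arg_maxP _ _ _ j0 xpredT (fun j => absK (b j)) isT.
have {}bi_max j : absK (b j) <= absK (b i) := bi_max j isT.
have bi0 : b i != 0.
  by apply/eqP => bi0; move: (bi_max j0); rewrite bi0 absK0 leNgt absK_gt0.
pose b' j := b j / b i.
have b'1 j : absK (b' j) <= 1.
  by rewrite absKM absKV ler_pdivrMr ?mul1r ?absK_gt0 ?bi_max.
have : \sum_j smul (b' j) (xs j) = smul (b i)^-1 (\sum_j smul (b j) (xs j)).
  by rewrite smul_sumr; apply: eq_bigr => j _; rewrite -smulA mulrC.
rewrite Sb0 smulr0 (bigD1_ord i) //= /b' mulfV // smul1 => /eqP; rewrite addr_eq0 => /eqP xs_i.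
have := xs_min (spans_mod_q_drop b'1 xs_i).
have n_gt0 : (0 < n)%N := leq_ltn_trans (leq0n i) (ltn_ord i).
by rewrite -{1}(prednK n_gt0) ltnn.
Qed.

Definition lincomb (a : 'rV[K]_n) : V := \sum_j smul (a ord0 j) (xs j).

Definition coords (v : V) : 'rV[K]_n := xget 0 [set a | lincomb a = v].

Lemma lincombD a b : lincomb (a + b) = lincomb a + lincomb b.
Proof. by rewrite -big_split; apply: eq_bigr => j _; rewrite mxE smulDl. Qed.

Lemma lincombZ c a : lincomb (c *: a) = smul c (lincomb a).
Proof. by rewrite /lincomb smul_sumr; apply: eq_bigr => j _; rewrite mxE smulA. Qed.

Lemma lincomb_inj : injective lincomb.
Proof.
move=> a b ab; apply/rowP => j; apply/eqP; rewrite -subr_eq0; apply/eqP.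
have := @min_spans_mod_q_free (fun j => (a - b) ord0 j) _ j; rewrite !mxE; apply.
transitivity (lincomb a - lincomb b); last by rewrite ab subrr.
by rewrite -sumrB; apply: eq_bigr => k _; rewrite !mxE smulBl.
Qed.

Lemma coordsK : cancel coords lincomb.
Proof.
move=> v; rewrite /coords; apply: (xgetPex 0 (P := [set a | lincomb a = v])).
have [k /spans_mod_q_expansion[a _ va]] := qpowZ_absorbing v.
exists ((q%:R ^- k) *: \row_j a j); rewrite /= lincombZ -(smulVK v (qX_neq0 k)).
by congr smul; rewrite va; apply: eq_bigr => j _; rewrite mxE.
Qed.

Lemma lincombK : cancel lincomb coords.
Proof. by move=> a; apply: lincomb_inj; rewrite coordsK. Qed.

Lemma lincomb_ball a : ball1_Kn absK n a <-> Z (lincomb a).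
Proof.
split => [a1|/spans_mod_q_expansion[b b1 ab]].
  by apply: Z_sum => j; apply: Z_unit_ball_stable (xs_spans.1 j).
suff -> : a = \row_j b j by move=> j; rewrite mxE.
by apply: lincomb_inj; rewrite ab; apply: eq_bigr => j _; rewrite mxE.
Qed.

Lemma lincomb_nbhs0 (U : set V) :
  nbhs (0 : V) U -> nbhs0_Kn absK n [set a | U (lincomb a)].
Proof.
move=> /nbhs0_qpowZ[k kU]; exists ((q%:R : rat) ^- k); first exact: qpowV_gt0.
move=> a ak; apply: kU; apply: qpowZ_sum => j.
by apply: qpowZ_small (xs_spans.1 j); apply: ltW.
Qed.

Lemma coords_nbhs0 (U : set 'rV[K]_n) :
  nbhs0_Kn absK n U -> nbhs (0 : V) [set v | U (coords v)].
Proof.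
move=> [eps eps0 epsU]; have [k epsk] := exists_qpowV_lt eps0.
apply: filterS (qpowZ_nbhs0 k) => _ /qpowZ_elim[z Zz ->] /=.
have z1 : ball1_Kn absK n (coords z) by apply/lincomb_ball; rewrite coordsK.
rewrite -[z]coordsK -lincombZ lincombK; apply: epsU => j.
rewrite mxE absKM absK_qX; apply: le_lt_trans epsk.
by rewrite ler_piMr ?(ltW (qpowV_gt0 k)) ?z1.
Qed.

End Spanning.

Lemma factor_iso_Qq : exists n (g : V -> 'rV[K]_n) (phi : 'rV[K]_n -> V),
  factor_iso (fun r x => smul (ratr r) x) (fun r v => ratr r *: v)
    (nbhs (0 : V)) Z (nbhs0_Kn absK n) (ball1_Kn absK n) g phi.
Proof.
have [n [xs [xs_spans xs_min]]] := min_spans_mod_q_exists.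
have coordsK := coordsK xs_spans.
have lincomb_inj := lincomb_inj xs_spans xs_min.
exists n, (coords xs), (lincomb xs); split.
- exact: coordsK.
- exact: lincombK.
- by move=> u v; apply: lincomb_inj; rewrite lincombD !coordsK.
- by move=> r v; apply: lincomb_inj; rewrite lincombZ !coordsK.
- by move=> v; rewrite -{2}[v]coordsK; apply: lincomb_ball.
- exact: coords_nbhs0.
- exact: lincomb_nbhs0.
Qed.

End TopVectorSpace.
End QqModel.

Lemma dep_choice (I : Type) (T : I -> Type) (P : forall i, T i -> Prop) :
  (forall i, exists t, P i t) -> exists f : forall i, T i, forall i, P i (f i).
Proof. by move=> PT; exists (fun i => proj1_sig (cid (PT i))) => i; case: cid. Qed.

Theorem mainTheorem7
  (Sigma : pred nat) (HSigma : forall q, Sigma q -> prime q)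
  (K : idx Sigma -> fieldType) (absK : forall i, K i -> rat)
  (HK : forall i, is_Qq_model (val i) (absK i))
  (V : idx Sigma -> topologicalZmodType)
  (HV : forall i, hausdorff_space (V i) /\ locally_compact [set: V i])
  (smul : forall i, K i -> V i -> V i)
  (Hsmul : forall i, is_top_vspace (absK i) (smul i))
  (Z : forall i, set (V i))
  (HZ : forall i, compact_open_subgroup (Z i)) :
  (exists n : idx Sigma -> nat,
   exists f : (forall i, V i) -> (forall i, 'rV[K i]_(n i)),
     rp_iso Sigma
       (fun i r x => smul i (ratr r) x) (fun i r v => ratr r *: v)
       (fun i => nbhs (0 : V i)) Z
       (fun i => nbhs0_Kn (absK i) (n i)) (fun i => ball1_Kn (absK i) (n i))
       f)
  /\ no_small_submodules Sigma (fun i r x => smul i (ratr r) x)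
       (fun i => nbhs (0 : V i)) Z.
Proof.
have q_prime (i : idx Sigma) : prime (val i) := HSigma _ (valP i).
split.
  have /dep_choice[n /dep_choice[g /dep_choice[phi gI]]] := fun i =>
    factor_iso_Qq (q_prime i) (HK i) (HV i).1 (Hsmul i) (HZ i).
  by exists n, (fun x i => g i (x i)); apply: rp_iso_coordinatewise gI.
apply: rp_no_small_submodules => [i|i]; first exact: Z_nbhs0.
exists (val i)%:R^-1; first exact: in_ZSinv_natV (valP i).
move=> x orbitZ; apply: (qinv_orbit_in_Z (q_prime i) (HK i) (HV i).1 (Hsmul i) (HZ i)).
exact: orbitZ.
Qed.
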